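(* Let $K\in\{\mathbb R,\mathbb C,\mathbb H\}$ and let $(E,d)$ be a metric vector space over $K$ such that $d$ is $C_0$-translation invariant and $(C_1,C_2,C_3)$-lipschitz multiplicative. Let $d_0(x,y)=\int_{\mathbb U}d(ux,uy)\,d\mu(u)$, $\delta(x,y)=\lim_{n\to\infty}\frac1n d(nx,ny)$ and $\delta_0(x,y)=\lim_{n\to\infty}\frac1n d_0(nx,ny)$. Then for all $x,y\in E$, $$\delta_0(x,y)=\int_{\mathbb U}\delta(ux,uy)\,d\mu(u).$$
   Context: A metric vector space is a topological vector space over $K$ whose topology is generated by the metric $d$. $\mathbb U=\{u\in K:|u|=1\}$, $\mu$ the right-invariant Haar probability measure on $\mathbb U$. $d$ is $C_0$-translation invariant if $d(x+z,y+z)\le d(x,y)+C_0$ for all $x,y,z$. $(C_1,C_2,C_3)$-lipschitz multiplicative ($C_1\ge1$, $C_2,C_3\ge0$) means $C_1^{-1}|\lambda|d(x,y)-C_2|\lambda|-C_3\le d(\lambda x,\lambda y)\le C_1|\lambda|d(x,y)+C_2|\lambda|+C_3$ for all $\lambda\in K$, $x,y\in E$. (Under these hypotheses the limits defining $\delta,\delta_0$ exist.) *)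

From HB Require Import structures.
From mathcomp Require Import all_boot all_order all_algebra.
From mathcomp Require Import all_classical all_reals all_analysis.
Set Implicit Arguments. Unset Strict Implicit. Unset Printing Implicit Defensive.
Import Order.TTheory GRing.Theory Num.Theory.
Import numFieldNormedType.Exports.
Local Open Scope classical_set_scope.
Local Open Scope ring_scope.

(* The scalar field K in {R, C, H} is realised inside the Hamilton
   quaternions H = R^4 (components (q0,q1),(q2,q3), q = q0 + q1 i + q2 j + q3 k):
   R = {q1 = q2 = q3 = 0}, C = {q2 = q3 = 0}, H = everything.
   H carries the product (Borel) sigma-algebra of R^4. *)
Definition quat (R : realType) := ((R * R) * (R * R))%type.

Inductive scalars := KR | KC | KH.

Section Quat.
Variable R : realType.
Implicit Types p q : quat R.

Definition q0 q := q.1.1.  Definition q1 q := q.1.2.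
Definition q2 q := q.2.1.  Definition q3 q := q.2.2.
Definition mkq (a b c e : R) : quat R := ((a, b), (c, e)).

Definition qadd p q := mkq (q0 p + q0 q) (q1 p + q1 q) (q2 p + q2 q) (q3 p + q3 q).
Definition qsub p q := mkq (q0 p - q0 q) (q1 p - q1 q) (q2 p - q2 q) (q3 p - q3 q).
Definition qmul p q := mkq
  (q0 p * q0 q - q1 p * q1 q - q2 p * q2 q - q3 p * q3 q)
  (q0 p * q1 q + q1 p * q0 q + q2 p * q3 q - q3 p * q2 q)
  (q0 p * q2 q - q1 p * q3 q + q2 p * q0 q + q3 p * q1 q)
  (q0 p * q3 q + q1 p * q2 q - q2 p * q1 q + q3 p * q0 q).
Definition qone : quat R := mkq 1 0 0 0.
Definition qnat (n : nat) : quat R := mkq n%:R 0 0 0.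
Definition qnorm q := Num.sqrt (q0 q ^+ 2 + q1 q ^+ 2 + q2 q ^+ 2 + q3 q ^+ 2).

Definition inK (k : scalars) q : Prop :=
  match k with
  | KR => q1 q = 0 /\ q2 q = 0 /\ q3 q = 0
  | KC => q2 q = 0 /\ q3 q = 0
  | KH => True
  end.

Definition unitK (k : scalars) : set (quat R) := [set u | inK k u /\ qnorm u = 1].
End Quat.

Section MVS.
Variables (R : realType) (k : scalars) (E : zmodType).
Variable scal : quat R -> E -> E.
Variable d : E -> E -> R.

(* E is a (left) K-vector space via scal (only scalars in K matter) *)
Definition is_Kmodule : Prop :=
  (forall a x y, inK k a -> scal a (x + y) = scal a x + scal a y) /\
  (forall a b x, inK k a -> inK k b -> scal (qadd a b) x = scal a x + scal b x) /\
  (forall a b x, inK k a -> inK k b -> scal (qmul a b) x = scal a (scal b x)) /\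
  (forall x, scal (@qone R) x = x).

Definition is_metric : Prop :=
  (forall x y, 0 <= d x y) /\ (forall x y, d x y = 0 <-> x = y) /\
  (forall x y, d x y = d y x) /\ (forall x y z, d x z <= d x y + d y z).

Definition tvs_metric_topology : Prop :=
  (forall x y (e : R), 0 < e -> exists2 r : R, 0 < r &
     forall x' y', d x x' < r -> d y y' < r -> d (x + y) (x' + y') < e) /\
  (forall a x (e : R), inK k a -> 0 < e -> exists2 r : R, 0 < r &
     forall a' x', inK k a' -> qnorm (qsub a a') < r -> d x x' < r ->
       d (scal a x) (scal a' x') < e).

Definition metric_vector_space : Prop :=
  [/\ is_Kmodule, is_metric & tvs_metric_topology].

Definition translation_invariant (C0 : R) : Prop :=
  forall x y z, d (x + z) (y + z) <= d x y + C0.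

Definition lipschitz_multiplicative (C1 C2 C3 : R) : Prop :=
  [/\ 1 <= C1, 0 <= C2, 0 <= C3 &
   forall l x y, inK k l ->
     C1^-1 * qnorm l * d x y - C2 * qnorm l - C3 <= d (scal l x) (scal l y) /\
     d (scal l x) (scal l y) <= C1 * qnorm l * d x y + C2 * qnorm l + C3].

(* right-invariant (Haar) probability measure on U, viewed as a probability
   on H concentrated on U *)
Definition right_invariant_haar (mu : probability (quat R) R) : Prop :=
  mu (@unitK R k) = 1%E /\
  forall v A, @unitK R k v -> measurable A ->
    mu ((fun u => qmul u v) @^-1` A) = mu A.

Definition d0 (mu : probability (quat R) R) (x y : E) : R :=
  Rintegral mu (@unitK R k) (fun u => d (scal u x) (scal u y)).

Definition delta (x y : E) : R :=
  limn (fun n : nat => d (scal (@qnat R n) x) (scal (@qnat R n) y) / n%:R).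

Definition delta0 (mu : probability (quat R) R) (x y : E) : R :=
  limn (fun n : nat => d0 mu (scal (@qnat R n) x) (scal (@qnat R n) y) / n%:R).
End MVS.

(* Translation invariance makes n |-> d(nx, ny) subadditive up to the constant
   2 C0, so by Fekete's lemma d(nx, ny)/n converges to delta(x, y) and stays below
   d(x, y) + 2 C0.  Apply this to ux, uy for u in U: since the integers commute with
   u, d(u(nx), u(ny))/n is the n-th term for (ux, uy).  These functions of u are
   measurable (continuity of scalar multiplication makes them lower semicontinuous
   on U), bounded on U uniformly in n by Lipschitz multiplicativity, and converge
   pointwise to u |-> delta(ux, uy); dominated convergence gives the identity. *)

From mathcomp Require Import all_boot all_order all_algebra.
From mathcomp Require Import all_classical all_reals all_analysis.
From mathcomp Require Import ring lra measurable_realfun.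
Import Order.TTheory GRing.Theory Num.Theory.
Import numFieldNormedType.Exports.
Local Open Scope classical_set_scope.
Local Open Scope ring_scope.
Set Implicit Arguments. Unset Strict Implicit. Unset Printing Implicit Defensive.

Section Subadditive.
Variables (R : realType) (b : nat -> R).
Hypotheses (b_ge0 : forall n, 0 <= b n) (b_sub : forall m n, b (m + n)%N <= b m + b n).

Lemma subadditive_mulnD m q r : b (q * m + r)%N <= q%:R * b m + b r.
Proof.
elim: q => [|q IH]; first by rewrite mul0n add0n mul0r add0r.
rewrite mulSn -addnA -natr1; apply: (le_trans (b_sub _ _)); lra.
Qed.

Lemma subadditive_div_le m n : (0 < m)%N -> (0 < n)%N ->
  b n / n%:R <= b m / m%:R + (\sum_(r < m) b r) / n%:R.
Proof.
move=> m_gt0 n_gt0; set M := \sum_(r < m) b r.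
have n_pos : 0 < n%:R :> R by rewrite ltr0n.
have m_pos : 0 < m%:R :> R by rewrite ltr0n.
have br_le : b (n %% m) <= M.
  rewrite /M (bigD1 (Ordinal (ltn_pmod n m_gt0))) //= lerDl.
  by apply: sumr_ge0 => i _.
have qm_le : (n %/ m)%:R * m%:R <= n%:R :> R.
  by rewrite -natrM ler_nat {2}(divn_eq n m) leq_addr.
have bm_div : 0 <= b m / m%:R by rewrite divr_ge0 // ltW.
rewrite ler_pdivrMr // mulrDl divfK ?lt0r_neq0 //.
rewrite {1}(divn_eq n m); apply: (le_trans (subadditive_mulnD _ _ _)).
rewrite lerD // -{1}(divfK (lt0r_neq0 m_pos) (b m)).
move: bm_div qm_le; set W := b m / m%:R; set q := (n %/ m)%:R => *; nra.
Qed.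

Lemma subadditive_cvg :
  (fun n => b n / n%:R) @ \oo --> inf [set b n / n%:R | n in [set n | (0 < n)%N]].
Proof.
set S := [set _ | _ in _].
have S_lb : has_lbound S by exists 0 => _ [n _ <-]; rewrite divr_ge0.
have S_inf : has_inf S by split => //; exists (b 1%N / 1%:R); exists 1%N.
apply/cvgrPdist_lt => e e_gt0.
have e2_gt0 : 0 < e / 2 by rewrite divr_gt0.
have [_ [m m_gt0 <-] bm_lt] := inf_adherent e2_gt0 S_inf.
set M := \sum_(r < m) b r.
have M_ge0 : 0 <= M by apply: sumr_ge0.
have N_ge0 : 0 <= M * 2 / e by rewrite divr_ge0 ?mulr_ge0 // ltW.
exists (Num.bound (M * 2 / e)).+1 => // n /= N_le_n.
have n_gt0 : (0 < n)%N by apply: leq_trans N_le_n.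
have n_pos : 0 < n%:R :> R by rewrite ltr0n.
have Mn_lt : M / n%:R < e / 2.
  have N_lt : M * 2 / e < n%:R.
    by apply: (lt_le_trans (archi_boundP N_ge0)); rewrite ler_nat ltnW.
  by rewrite ltr_pdivrMr // mulrAC ltr_pdivlMr // [e * _]mulrC -ltr_pdivrMr.
have L_le : inf S <= b n / n%:R by apply: ge_inf => //; exists n.
have le_L : b n / n%:R <= b m / m%:R + M / n%:R.
  exact: subadditive_div_le.
rewrite ltr_distlC; apply/andP; split; lra.
Qed.

End Subadditive.

Section QuasiSubadditive.
Variables (R : realType) (a : nat -> R) (C : R).
Hypotheses (C_ge0 : 0 <= C) (a_ge0 : forall n, 0 <= a n)
  (a_sub : forall m n, a (m + n)%N <= a m + a n + C).

Let aC_ge0 n : 0 <= a n + C. Proof. exact: addr_ge0. Qed.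
Let aC_sub m n : a (m + n)%N + C <= (a m + C) + (a n + C).
Proof. by have := a_sub m n; lra. Qed.

Lemma quasi_subadditive_le n : a n <= n%:R * (a 1%N + C) + a 0%N.
Proof.
have := subadditive_mulnD aC_sub 1 n 0; rewrite muln1 addn0; lra.
Qed.

Lemma quasi_subadditive_cvg :
  (fun n => a n / n%:R) @ \oo --> inf [set (a n + C) / n%:R | n in [set n | (0 < n)%N]].
Proof.
have C_div : (fun n => C / n%:R) @ \oo --> 0.
  have Cn := cvgM (cvg_cst C) (@cvg_harmonic R); rewrite mulr0 in Cn.
  by rewrite -cvg_shiftS; exact: Cn.
rewrite -[X in _ --> X]subr0.
have -> : (fun n => a n / n%:R) = (fun n => (a n + C) / n%:R) - (fun n => C / n%:R).
  by apply/funext => n; rewrite fctE mulrDl addrK.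
exact: cvgB (subadditive_cvg aC_ge0 aC_sub) C_div.
Qed.

End QuasiSubadditive.

Section Quaternions.
Variable R : realType.
Implicit Types (u v : quat R) (k : scalars).

Lemma qnat_inK k n : inK k (qnat R n).
Proof. by case: k. Qed.

Lemma qnatD m n : qnat R (m + n) = qadd (qnat R m) (qnat R n).
Proof. by rewrite /qadd /qnat /mkq /q0 /q1 /q2 /q3 /= natrD !addr0. Qed.

Lemma qmul_qnatC u n : qmul u (qnat R n) = qmul (qnat R n) u.
Proof.
rewrite /qmul /qnat /mkq /q0 /q1 /q2 /q3 /=.
by congr (_, _); congr (_, _); ring.
Qed.

Lemma qnorm_qsub_lt u v (s : R) :
  `|q0 u - q0 v| < s -> `|q1 u - q1 v| < s ->
  `|q2 u - q2 v| < s -> `|q3 u - q3 v| < s -> qnorm (qsub u v) < 2 * s.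
Proof.
move=> lt0 lt1 lt2 lt3.
have s_gt0 : 0 < s by apply: le_lt_trans lt0.
have sqr_lt (z : R) : `|z| < s -> z ^+ 2 < s ^+ 2.
  by move=> z_lt; rewrite -real_normK ?num_real // ltrXn2r // ltW.
rewrite /qnorm -[X in _ < X]ger0_norm ?mulr_ge0 ?ltW // -sqrtr_sqr.
rewrite ltr_sqrt ?exprn_gt0 ?mulr_gt0 //.
move: (sqr_lt _ lt0) (sqr_lt _ lt1) (sqr_lt _ lt2) (sqr_lt _ lt3).
rewrite /qsub /mkq /q0 /q1 /q2 /q3 /=; lra.
Qed.

Lemma measurable_q0 : measurable_fun setT (@q0 R).
Proof. exact: measurableT_comp measurable_fst measurable_fst. Qed.
Lemma measurable_q1 : measurable_fun setT (@q1 R).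
Proof. exact: measurableT_comp measurable_snd measurable_fst. Qed.
Lemma measurable_q2 : measurable_fun setT (@q2 R).
Proof. exact: measurableT_comp measurable_fst measurable_snd. Qed.
Lemma measurable_q3 : measurable_fun setT (@q3 R).
Proof. exact: measurableT_comp measurable_snd measurable_snd. Qed.

Lemma measurableT_preimage (f : quat R -> R) (A : set R) :
  measurable_fun setT f -> measurable A -> measurable (f @^-1` A).
Proof. by move=> mf mA; rewrite -[_ @^-1` _]setTI; apply: mf. Qed.

Lemma measurable_inK k : measurable [set u : quat R | inK k u].
Proof.
have m0 (f : quat R -> R) : measurable_fun setT f -> measurable (f @^-1` [set 0]).
  by move=> mf; apply: measurableT_preimage mf (measurable_set1 0).
case: k; last by rewrite (_ : [set u | _] = setT).
- change (measurable ((@q1 R) @^-1` [set 0] `&`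
    ((@q2 R) @^-1` [set 0] `&` (@q3 R) @^-1` [set 0]))).
  by repeat apply: measurableI; apply: m0;
    [exact: measurable_q1 | exact: measurable_q2 | exact: measurable_q3].
- change (measurable ((@q2 R) @^-1` [set 0] `&` (@q3 R) @^-1` [set 0])).
  by apply: measurableI; apply: m0; [exact: measurable_q2 | exact: measurable_q3].
Qed.

Lemma measurable_qnorm : measurable_fun setT (@qnorm R).
Proof.
have msqrt : measurable_fun setT (@Num.sqrt R).
  exact: continuous_measurable_fun (@sqrt_continuous R).
rewrite (_ : @qnorm R =
  Num.sqrt \o fun q => q0 q ^+ 2 + q1 q ^+ 2 + q2 q ^+ 2 + q3 q ^+ 2) //.
apply: measurableT_comp msqrt _.
by repeat apply: measurable_funD; apply: measurable_funX;
  [exact: measurable_q0 | exact: measurable_q1 | exact: measurable_q2 | exact: measurable_q3].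
Qed.

Lemma measurable_unitK k : measurable (@unitK R k).
Proof.
apply: measurableI; first exact: measurable_inK.
exact: measurableT_preimage measurable_qnorm (measurable_set1 1).
Qed.

(* Open cubes with rational centre and radius: a countable base of the topology of R^4. *)
Definition qbox (c0 c1 c2 c3 r : rat) : set (quat R) :=
  (@q0 R) @^-1` ball (@ratr R c0) (ratr r) `&` (@q1 R) @^-1` ball (@ratr R c1) (ratr r) `&`
  (@q2 R) @^-1` ball (@ratr R c2) (ratr r) `&` (@q3 R) @^-1` ball (@ratr R c3) (ratr r).

Lemma measurable_qbox c0 c1 c2 c3 r : measurable (qbox c0 c1 c2 c3 r).
Proof.
by repeat apply: measurableI; apply: measurableT_preimage; try exact: measurable_ball;
  [exact: measurable_q0 | exact: measurable_q1 | exact: measurable_q2 | exact: measurable_q3].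
Qed.

Lemma qbox_qnorm_lt c0 c1 c2 c3 r u v : qbox c0 c1 c2 c3 r u -> qbox c0 c1 c2 c3 r v ->
  qnorm (qsub u v) < 4 * ratr r.
Proof.
have close (c x y : R) : ball c (ratr r) x -> ball c (ratr r) y -> `|x - y| < 2 * ratr r.
  rewrite -!ball_normE /ball_ /= !ltr_norml => /andP[? ?] /andP[? ?].
  by apply/andP; split; lra.
rewrite /qbox /preimage => -[[[u0 u1] u2] u3] [[[v0 v1] v2] v3].
rewrite (_ : 4 * ratr r = 2 * (2 * ratr r)); last by rewrite mulrA -natrM.
by apply: qnorm_qsub_lt;
  [exact: close u0 v0 | exact: close u1 v1 | exact: close u2 v2 | exact: close u3 v3].
Qed.

Lemma qbox_cover u r : 0 < ratr r :> R -> exists c0 c1 c2 c3, qbox c0 c1 c2 c3 r u.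
Proof.
move=> r_gt0.
have near_rat (z : R) : exists c : rat, ball (@ratr R c) (ratr r) z.
  have z_lt : z - ratr r < z + ratr r by lra.
  have [c] := rat_in_itvoo z_lt; rewrite in_itv /= -ball_normE /ball_ /= => /andP[? ?]; exists c.
  by rewrite ltr_norml; apply/andP; split; lra.
have [c0 ?] := near_rat (q0 u); have [c1 ?] := near_rat (q1 u).
have [c2 ?] := near_rat (q2 u); have [c3 ?] := near_rat (q3 u).
by exists c0, c1, c2, c3.
Qed.

Definition qlower_semicontinuous (D : set (quat R)) (f : quat R -> R) :=
  forall u e, D u -> 0 < e -> exists2 r, 0 < r &
    forall v, D v -> qnorm (qsub u v) < r -> f u < f v + e.

Lemma qlower_semicontinuous_qbox D f u t : qlower_semicontinuous D f -> D u -> t < f u ->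
  exists c0 c1 c2 c3 r, qbox c0 c1 c2 c3 r u /\
    forall v, qbox c0 c1 c2 c3 r v -> D v -> t < f v.
Proof.
move=> f_lsc Du t_lt.
have ft_gt0 : 0 < f u - t by rewrite subr_gt0.
have [r r_gt0 f_near] := f_lsc u (f u - t) Du ft_gt0.
have r4_gt0 : 0 < r / 4 by rewrite divr_gt0.
have [rho] := rat_in_itvoo r4_gt0; rewrite in_itv /= => /andP[rho_gt0 rho_lt].
have [c0 [c1 [c2 [c3 box_u]]]] := qbox_cover u rho_gt0.
exists c0, c1, c2, c3, rho; split => // v box_v Dv.
suff : f u < f v + (f u - t) by lra.
apply: f_near => //; apply: (lt_le_trans (qbox_qnorm_lt box_u box_v)); lra.
Qed.

Lemma qlower_semicontinuous_measurable D f :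
  qlower_semicontinuous D f -> measurable_fun D f.
Proof.
(* D `&` [f > t] is the union, over the countably many boxes on whose trace on D
   f stays above t, of these traces. *)
move=> f_lsc mD; apply: (measurability _ (RGenOInfty.measurableE R)) => //.
move=> _ [_ [t ->] <-].
pose B c0 c1 c2 c3 r :=
  if pselect (forall v, qbox c0 c1 c2 c3 r v -> D v -> t < f v)
  then qbox c0 c1 c2 c3 r else set0.
rewrite (_ : D `&` f @^-1` `]t, +oo[ =
    D `&` \bigcup_c0 \bigcup_c1 \bigcup_c2 \bigcup_c3 \bigcup_r B c0 c1 c2 c3 r).
  apply: measurableI => //; do 5 apply: bigcupT_measurable_rat => ?.
  by rewrite /B; case: pselect => ?; [exact: measurable_qbox | exact: measurable0].
apply/seteqP; split => u [Du fu]; split => //.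
- move: fu; rewrite /preimage /= in_itv /= andbT => fu.
  have [c0 [c1 [c2 [c3 [r [box_u good]]]]]] := qlower_semicontinuous_qbox f_lsc Du fu.
  exists c0 => //; exists c1 => //; exists c2 => //; exists c3 => //; exists r => //.
  by rewrite /B; case: pselect.
- case: fu => c0 _ [c1 _ [c2 _ [c3 _ [r _ Bu]]]].
  move: Bu; rewrite /B /preimage /= in_itv /= andbT.
  by case: pselect => [good /= box_u|//]; apply: good.
Qed.

End Quaternions.

Section MetricVectorSpace.
Variables (R : realType) (k : scalars) (E : zmodType).
Variables (scal : quat R -> E -> E) (d : E -> E -> R) (C0 C1 C2 C3 : R).
Hypotheses (scal_module : is_Kmodule k scal) (d_metric : is_metric d).
Hypotheses (scal_cont : tvs_metric_topology k scal d).
Hypotheses (d_ti : translation_invariant d C0).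
Hypotheses (d_lip : lipschitz_multiplicative k scal d C1 C2 C3).
Implicit Types (X Y : E) (u : quat R).

Lemma d_ge0 X Y : 0 <= d X Y. Proof. by case: d_metric. Qed.
Lemma d_xx X : d X X = 0. Proof. by case: d_metric => _ [d_eq0 _]; apply/d_eq0. Qed.
Lemma d_sym X Y : d X Y = d Y X. Proof. by case: d_metric => _ [_ []]. Qed.
Lemma d_triangle X Y Z : d X Z <= d X Y + d Y Z. Proof. by case: d_metric => _ [_ []]. Qed.

Lemma translation_defect_ge0 : 0 <= C0.
Proof. by have := d_ti 0 0 0; rewrite addr0 d_xx add0r. Qed.

Lemma scal_qnatD m n X :
  scal (qnat R (m + n)) X = scal (qnat R m) X + scal (qnat R n) X.
Proof. by case: scal_module => _ [scalDl _]; rewrite qnatD scalDl //; apply: qnat_inK. Qed.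

Lemma scal_qnat0 X : scal (qnat R 0) X = 0.
Proof. by apply: (addrI (scal (qnat R 0) X)); rewrite addr0 -scal_qnatD. Qed.

Lemma scal_qnat1 X : scal (qnat R 1) X = X.
Proof. by case: scal_module => _ [_ [_]]. Qed.

Lemma scal_qnatC u n X : inK k u ->
  scal u (scal (qnat R n) X) = scal (qnat R n) (scal u X).
Proof.
case: scal_module => _ [_ [scalA _]] Ku.
have Kn := @qnat_inK R k n.
by rewrite -scalA // qmul_qnatC scalA.
Qed.

Definition dnat X Y n := d (scal (qnat R n) X) (scal (qnat R n) Y).

Lemma dnat_quasi_subadditive X Y m n :
  dnat X Y (m + n) <= dnat X Y m + dnat X Y n + 2 * C0.
Proof.
rewrite /dnat !scal_qnatD.
set A := scal _ X; set B := scal _ X; set A' := scal _ Y; set B' := scal _ Y.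
apply: (le_trans (d_triangle _ (A' + B) _)).
have := d_ti A A' B; have := d_ti B B' A'.
rewrite [B + A']addrC [B' + A']addrC; lra.
Qed.

Lemma dnat_div_le X Y n : dnat X Y n / n%:R <= d X Y + 2 * C0.
Proof.
have C0_ge0 := translation_defect_ge0; have dXY_ge0 := d_ge0 X Y.
have := quasi_subadditive_le (dnat_quasi_subadditive X Y) n.
rewrite /dnat !scal_qnat1 !scal_qnat0 d_xx addr0.
case: n => [|n] dnat_le; first by rewrite invr0 mulr0; lra.
by rewrite ler_pdivrMr ?ltr0n //; lra.
Qed.

Lemma cvg_dnat_delta X Y : (fun n => dnat X Y n / n%:R) @ \oo --> delta scal d X Y.
Proof.
have := quasi_subadditive_cvg (mulr_ge0 (ler0n _ 2) translation_defect_ge0)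
  (fun n => d_ge0 _ _) (dnat_quasi_subadditive X Y).
by move=> dnat_cvg; rewrite /delta -/(dnat X Y) (cvg_lim _ dnat_cvg).
Qed.

Lemma dist_scal_unit_le u X Y : unitK k u ->
  d (scal u X) (scal u Y) <= C1 * d X Y + C2 + C3.
Proof.
case=> Ku u_norm; case: d_lip => _ _ _ lip.
by have [_] := lip u X Y Ku; rewrite u_norm !mulr1.
Qed.

Lemma dist_scal_lower_semicontinuous X Y :
  qlower_semicontinuous (unitK k) (fun u => d (scal u X) (scal u Y)).
Proof.
move=> u e [Ku _] e_gt0; case: scal_cont => _ scal_near.
have e2_gt0 : 0 < e / 2 by rewrite divr_gt0.
have [r1 r1_gt0 nearX] := scal_near u X _ Ku e2_gt0.
have [r2 r2_gt0 nearY] := scal_near u Y _ Ku e2_gt0.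
exists (Order.min r1 r2); first by rewrite lt_min r1_gt0 r2_gt0.
move=> v [Kv _]; rewrite lt_min => /andP[uv_r1 uv_r2].
have := nearX v X Kv uv_r1; rewrite d_xx => /(_ r1_gt0) dX.
have := nearY v Y Kv uv_r2; rewrite d_xx => /(_ r2_gt0) dY.
have := d_triangle (scal u X) (scal v X) (scal u Y).
have := d_triangle (scal v X) (scal v Y) (scal u Y).
rewrite (d_sym (scal v Y)); lra.
Qed.

Lemma measurable_dist_scal X Y :
  measurable_fun (unitK k) (fun u => d (scal u X) (scal u Y)).
Proof.
apply: qlower_semicontinuous_measurable; exact: dist_scal_lower_semicontinuous.
Qed.

Lemma dnat_scal u X Y n : inK k u ->
  dnat (scal u X) (scal u Y) n =
  d (scal u (scal (qnat R n) X)) (scal u (scal (qnat R n) Y)).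
Proof. by move=> Ku; rewrite /dnat !scal_qnatC. Qed.

Lemma measurable_dnat_scal X Y n :
  measurable_fun (unitK k) (fun u => dnat (scal u X) (scal u Y) n / n%:R).
Proof.
apply: (eq_measurable_fun (fun u => d (scal u (scal (qnat R n) X))
    (scal u (scal (qnat R n) Y)) * n%:R^-1)).
  by move=> u; rewrite inE => -[Ku _]; rewrite dnat_scal.
by apply: measurable_funM; [exact: measurable_dist_scal | exact: measurable_cst].
Qed.

Lemma measurable_delta_scal X Y :
  measurable_fun (unitK k) (fun u => delta scal d (scal u X) (scal u Y)).
Proof.
apply: (measurable_fun_cvg (measurable_dnat_scal X Y)) => u _.
exact: cvg_dnat_delta.
Qed.

Lemma is_cvg_dnat X Y : cvgn (fun n => dnat X Y n / n%:R).
Proof. by apply/cvg_ex; exists (delta scal d X Y); exact: cvg_dnat_delta. Qed.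

Lemma delta_le X Y : delta scal d X Y <= d X Y + 2 * C0.
Proof.
apply: limr_le; first exact: is_cvg_dnat.
by apply: nearW => n; exact: dnat_div_le.
Qed.

Lemma delta_ge0 X Y : 0 <= delta scal d X Y.
Proof.
apply: limr_ge; first exact: is_cvg_dnat.
by apply: nearW => n; rewrite divr_ge0 ?d_ge0.
Qed.

Lemma dnat_scal_unit_div_le u X Y n : unitK k u ->
  dnat (scal u X) (scal u Y) n / n%:R <= C1 * d X Y + C2 + C3 + 2 * C0.
Proof.
move=> Uu; apply: le_trans (dnat_div_le _ _ n) _.
by have := dist_scal_unit_le X Y Uu; lra.
Qed.

Lemma delta_scal_unit_le u X Y : unitK k u ->
  delta scal d (scal u X) (scal u Y) <= C1 * d X Y + C2 + C3 + 2 * C0.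
Proof.
move=> Uu; apply: le_trans (delta_le _ _) _.
by have := dist_scal_unit_le X Y Uu; lra.
Qed.

Lemma integrable_dist_scal (mu : {finite_measure set (quat R) -> \bar R}) X Y :
  mu.-integrable (unitK k) (EFin \o fun u => d (scal u X) (scal u Y)).
Proof.
have mU := @measurable_unitK R k.
set B := C1 * d X Y + C2 + C3.
apply: (le_integrable mU _ _ (finite_measure_integrable_cst mu B mU)).
  by apply/measurable_EFinP; exact: measurable_dist_scal.
move=> u Uu /=; rewrite lee_fin ger0_norm ?d_ge0 //.
exact: le_trans (dist_scal_unit_le X Y Uu) (ler_norm _).
Qed.

Lemma integrable_delta_scal (mu : {finite_measure set (quat R) -> \bar R}) X Y :
  mu.-integrable (unitK k) (EFin \o fun u => delta scal d (scal u X) (scal u Y)).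
Proof.
have mU := @measurable_unitK R k.
set B := C1 * d X Y + C2 + C3 + 2 * C0.
apply: (le_integrable mU _ _ (finite_measure_integrable_cst mu B mU)).
  by apply/measurable_EFinP; exact: measurable_delta_scal.
move=> u Uu /=; rewrite lee_fin ger0_norm ?delta_ge0 //.
exact: le_trans (delta_scal_unit_le X Y Uu) (ler_norm _).
Qed.

Lemma cvg_integral_dnat_delta (mu : {finite_measure set (quat R) -> \bar R}) X Y :
  (fun n => \int[mu]_(u in unitK k) (dnat (scal u X) (scal u Y) n / n%:R)%:E)%E @ \oo -->
  (\int[mu]_(u in unitK k) (delta scal d (scal u X) (scal u Y))%:E)%E.
Proof.
set B := C1 * d X Y + C2 + C3 + 2 * C0.
have mU := @measurable_unitK R k.
have dnat_dom : {ae mu, forall u n, unitK k u ->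
    `|(dnat (scal u X) (scal u Y) n / n%:R)%:E| <= B%:E}%E.
  apply: aeW => u n Uu; rewrite lee_fin ger0_norm ?divr_ge0 ?d_ge0 //.
  exact: dnat_scal_unit_div_le.
have dnat_cvg : {ae mu, forall u, unitK k u ->
    (fun n => (dnat (scal u X) (scal u Y) n / n%:R)%:E) @ \oo -->
    (delta scal d (scal u X) (scal u Y))%:E}.
  apply: aeW => u _; apply/fine_cvgP; split; first exact: nearW.
  exact: cvg_dnat_delta.
by case: (dominated_convergence mU
  (fun n => (measurable_EFinP _ _).2 (measurable_dnat_scal X Y n))
  ((measurable_EFinP _ _).2 (measurable_delta_scal X Y)) dnat_cvg
  (finite_measure_integrable_cst mu B mU) dnat_dom).
Qed.

Lemma d0_scal_qnat_div (mu : probability (quat R) R) X Y n :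
  d0 k scal d mu (scal (qnat R n) X) (scal (qnat R n) Y) / n%:R =
  fine (\int[mu]_(u in unitK k) (dnat (scal u X) (scal u Y) n / n%:R)%:E)%E.
Proof.
rewrite /d0 -(RintegralZr _ (@measurable_unitK R k) (integrable_dist_scal _ _ _)).
congr fine; apply: eq_integral => u; rewrite inE => -[Ku _].
by rewrite dnat_scal.
Qed.

Lemma delta0_integral (mu : probability (quat R) R) X Y :
  ((delta0 k scal d mu X Y)%:E =
    \int[mu]_(u in unitK k) (delta scal d (scal u X) (scal u Y))%:E)%E.
Proof.
have int_fin :=
  integrable_fin_num (@measurable_unitK R k) (integrable_delta_scal mu X Y).
rewrite -(fineK int_fin); congr EFin.
rewrite /delta0; under eq_fun do rewrite d0_scal_qnat_div.
apply: cvg_lim => //; apply: fine_cvg; rewrite fineK //.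
exact: cvg_integral_dnat_delta.
Qed.

End MetricVectorSpace.

Unset Implicit Arguments. Set Strict Implicit.

Theorem proposition3 (R : realType) (k : scalars) (E : zmodType)
  (scal : quat R -> E -> E) (d : E -> E -> R)
  (C0 C1 C2 C3 : R) (mu : probability (quat R) R) :
  metric_vector_space k scal d ->
  translation_invariant d C0 ->
  lipschitz_multiplicative k scal d C1 C2 C3 ->
  right_invariant_haar k mu ->
  forall x y : E,
    ((delta0 k scal d mu x y)%:E =
      \int[mu]_(u in @unitK R k) (delta scal d (scal u x) (scal u y))%:E)%E.
Proof.
move=> [scal_module d_metric scal_cont] d_ti d_lip _ x y.
exact: (delta0_integral scal_module d_metric scal_cont d_ti d_lip mu x y).
Qed.
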